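(* Let $f_n(x)=\kappa_nx^{a_n}$ with $\kappa_n>0$ and $0<a_n<1$, and fix $B_n>0$. Then the function $p\mapsto\varphi_n(p,B_n)$ on $[p_n^{\min}(B_n),\infty)$ attains its maximum at $$p=\max\Big\{p_n^{\min}(B_n),\ \Big[\exp\Big(a_n+\tfrac{r_{n,e}\ln2}{B_n}+W\big((\tfrac{a_ng_np_n^{cir}}{\sigma_n^2B_n}-a_n)e^{-a_n-\frac{r_{n,e}\ln2}{B_n}}\big)\Big)-1\Big]\frac{\sigma_n^2B_n}{g_n}\Big\}.$$
   Context: Constants $g_n>0$, $\sigma_n^2>0$, $p_n^{cir}>0$, $r_{n,e}\ge0$, $r_n^{\min}>0$, $r_n^{\min}\ge r_{n,e}$. $r_n(p,B)=B\log_2(1+\frac{g_np}{\sigma_n^2B})$; $\varphi_n(p,B)=\frac{f_n(r_n(p,B)-r_{n,e})}{p+p_n^{cir}}$. $p_n^{\min}(B)=\frac{(2^{r_n^{\min}/B}-1)\sigma_n^2B}{g_n}$. $W$ is the principal branch of the Lambert $W$ function ($W(z)$, $z\ge-1/e$, is the solution $x\ge-1$ of $xe^x=z$). *)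

From HB Require Import structures.
From mathcomp Require Import all_boot all_order all_algebra.
From mathcomp Require Import classical_sets reals exp sequences.
Set Implicit Arguments. Unset Strict Implicit. Unset Printing Implicit Defensive.
Import Order.TTheory GRing.Theory Num.Theory.
Local Open Scope ring_scope.
Local Open Scope classical_set_scope.

Section Defs.
Variable R : realType.

Definition log2 (x : R) : R := ln x / ln 2.

Definition rate (g sigma2 p B : R) : R := B * log2 (1 + g * p / (sigma2 * B)).

Definition fpow (kappa a x : R) : R := kappa * x `^ a.

Definition phi (kappa a g sigma2 pcir re p B : R) : R :=
  fpow kappa a (rate g sigma2 p B - re) / (p + pcir).

Definition pmin (g sigma2 rmin B : R) : R :=
  (2 `^ (rmin / B) - 1) * sigma2 * B / g.

(* Principal branch of Lambert W: for z >= -1/e, the unique x >= -1 with x e^x = z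
   (value unspecified, 0, outside the domain). *)
Definition LambertW (z : R) : R := xget 0 [set x | -1 <= x /\ x * expR x = z].

End Defs.

From HB Require Import structures.
From mathcomp Require Import all_boot all_order all_algebra.
From mathcomp Require Import all_classical all_reals all_analysis.
From mathcomp Require Import ring lra.
Import Order.TTheory GRing.Theory Num.Theory.
Import numFieldNormedType.Exports.
Local Open Scope ring_scope.

(* Reparametrize the power by the excess rate
   u = (r(p) - r_e) ln 2 / B >= 0, i.e. p = (e^(c+u) - 1) sigma^2 B / g with
   c = r_e ln 2 / B (power_of_excess).  Then phi is a positive constant times
   h(u) = u^a / (e^(c+u) + k), k = g p_cir / (sigma^2 B) - 1 > -1
   (phi_power_of_excess), and the constraint p >= p_min becomes u >= u_min.
   The sign of h' is that of s(u) = a (e^(c+u) + k) - u e^(c+u) (slope_num),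
   and s(u) = a k - e^(c+a) (u-a) e^(u-a) is nonincreasing for u >= a - 1
   because x e^x is increasing on [-1, oo).  Its zero is
   u_c = a + W(a k e^(-a-c)) (crit_excess), which is positive.
   Rather than differentiating, we compare h(u) with h(u0) directly: by the
   weighted AM-GM bound t^a <= a t + 1 - a and e^x >= 1 + x, h(u) <= h(u0)
   as soon as (u - u0) s(u0) <= 0 (excess_ratio_le).  Taking
   u0 = max(u_min, u_c) gives the maximum of h on [u_min, oo)
   (excess_ratio_max), and translating back through the monotone
   reparametrization yields the stated maximizer. *)

(* Weighted AM-GM (Young's inequality with exponents 1/a, 1/(1-a)): the
   concave map t |-> t^a lies below its tangent at t = 1. *)
Lemma powR_le_affine {R : realType} (a t : R) : 0 < a -> a < 1 -> 0 <= t ->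
  t `^ a <= a * t + (1 - a).
Proof.
move=> a0 a1 t0.
have a'0 : 0 < 1 - a by rewrite subr_gt0.
have := @conjugate_powR R (t `^ a) 1 a^-1 (1 - a)^-1 (powR_ge0 _ _) ler01.
rewrite !invr_gt0 !invrK mulr1 -powRrM mulfV ?gt_eqF // powRr1 // powR1 /=.
rewrite mul1r (mulrC t); apply=> //; ring.
Qed.

Lemma expR_sub1_le {R : realType} (s : R) : expR s - 1 <= s * expR s.
Proof.
have := expR_ge1Dx (- s).
rewrite -(ler_pM2l (expR_gt0 s)) -expRD addrN expR0; lra.
Qed.

(* x |-> x e^x is nondecreasing on [-1, oo): the branch on which the
   principal Lambert W inverts it. *)
Lemma xexpR_le {R : realType} (x y : R) : -1 <= x -> x <= y ->
  x * expR x <= y * expR y.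
Proof.
move=> x1 xy; set s := y - x.
have -> : y = x + s by rewrite /s addrC subrK.
rewrite expRD mulrA [_ * expR x]mulrC [(x + s) * _]mulrC -mulrA ler_pM2l ?expR_gt0 //.
have s1 : 1 <= expR s by rewrite -expR0 ler_expR subr_ge0.
have := expR_sub1_le s; nra.
Qed.

(* On its domain [-1/e, oo), LambertW is a genuine inverse of x e^x on
   [-1, oo); existence of a preimage comes from the intermediate value
   theorem between -1 and |z|. *)
Lemma LambertW_spec {R : realType} {z : R} : - expR (-1) <= z ->
  -1 <= LambertW z /\ LambertW z * expR (LambertW z) = z.
Proof.
move=> hz; apply: (@xgetPex R 0 [set x | -1 <= x /\ x * expR x = z]).
have z1 : -1 <= `|z| by apply: le_trans (normr_ge0 z); lra.
have e1 : 1 <= expR `|z| by rewrite -expR0 ler_expR.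
have hbracket : Num.min ((-1) * expR (-1)) (`|z| * expR `|z|) <= z
                <= Num.max ((-1) * expR (-1)) (`|z| * expR `|z|).
  rewrite ge_min le_max mulN1r hz /=.
  by apply/orP; right; have := ler_norm z; have := normr_ge0 z; nra.
have xexpR_cont : continuous (fun x : R => x * expR x).
  by move=> x; apply: continuousM; [exact: cvg_id | exact: continuous_expR].
have [x] := IVT z1 (continuous_subspaceT xexpR_cont) hbracket.
by rewrite in_itv /= => /andP[x1 _] xE; exists x.
Qed.

Section ExcessRatio.
Context {R : realType}.
Variables (a c k : R).
Hypotheses (a_gt0 : 0 < a) (a_lt1 : a < 1).

Definition excess_ratio (u : R) : R := u `^ a / (expR (c + u) + k).

(* Numerator of the logarithmic derivative of excess_ratio:
   (ln h)'(u) = slope_num u / (u (e^(c+u) + k)). *)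
Definition slope_num (u : R) : R := a * (expR (c + u) + k) - u * expR (c + u).

(* Global first-order test: if moving from u0 towards u does not increase h
   to first order, then h(u) <= h(u0).  Uses AM-GM on (u/u0)^a and the
   tangent bound e^(u-u0) >= 1 + (u - u0). *)
Lemma excess_ratio_le (u0 u : R) : 0 < u0 -> 0 <= u ->
  0 < expR (c + u0) + k -> 0 < expR (c + u) + k ->
  (u - u0) * slope_num u0 <= 0 -> excess_ratio u <= excess_ratio u0.
Proof.
move=> u0_gt0 u_ge0 D0_gt0 D_gt0; rewrite /slope_num /excess_ratio.
set X0 := expR (c + u0) in D0_gt0 *; set X := expR (c + u) in D_gt0 *.
move=> slope_sign.
have X0_gt0 : 0 < X0 by apply: expR_gt0.
have X_ge : X0 * (1 + (u - u0)) <= X.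
  have -> : X = X0 * expR (u - u0) by rewrite /X /X0 -expRD; congr expR; ring.
  by rewrite ler_pM2l ?expR_ge1Dx.
set m := u / u0.
have uE : u = u0 * m by rewrite /m mulrC divfK ?gt_eqF.
have m_ge0 : 0 <= m by rewrite /m divr_ge0 // ltW.
rewrite {1}uE powRM //; last exact: ltW.
rewrite ler_pdivrMr // mulrAC ler_pdivlMr //.
rewrite -mulrA ler_pM2l ?powR_gt0 //.
apply: (le_trans (y := (a * m + (1 - a)) * (X0 + k))).
  by rewrite ler_pM2r // powR_le_affine.
rewrite -(ler_pM2l u0_gt0); rewrite uE in slope_sign X_ge; nra.
Qed.

Lemma slope_numE (u : R) :
  slope_num u = a * k - expR (c + a) * ((u - a) * expR (u - a)).
Proof.
rewrite /slope_num mulrCA -expRD.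
have -> : c + a + (u - a) = c + u by ring.
ring.
Qed.

Lemma slope_num_noninc (u v : R) : a - 1 <= u -> u <= v ->
  slope_num v <= slope_num u.
Proof.
move=> u_ge uv; rewrite !slope_numE lerD2l lerN2 ler_pM2l ?expR_gt0 //.
by apply: xexpR_le; rewrite ?lerD2r //; lra.
Qed.

Hypotheses (c_ge0 : 0 <= c) (k_gtN1 : -1 < k).

Lemma denom_gt0 (u : R) : 0 <= u -> 0 < expR (c + u) + k.
Proof.
move=> u_ge0; have : 1 <= expR (c + u) by rewrite -expR0 ler_expR addr_ge0.
move=> ?; have := k_gtN1; lra.
Qed.

Definition crit_excess : R := a + LambertW (a * k * expR (- a - c)).

(* The Lambert argument lies in the domain of W, since it exceeds
   -a e^(-a) >= -1/e. *)
Lemma lambert_arg_ge : - expR (-1) <= a * k * expR (- a - c).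
Proof.
have shift : expR (- a - c) <= expR (- a) by rewrite ler_expR lerBlDr lerDl.
have : -1 * expR (-1) <= - a * expR (- a) by apply: xexpR_le; rewrite // lerN2 ltW.
have : 0 <= a * (k + 1) * expR (- a - c).
  by rewrite !mulr_ge0 ?expR_ge0 ?ltW // -ltrBlDr sub0r.
have : a * expR (- a - c) <= a * expR (- a) by rewrite ler_pM2l.
have := k_gtN1; lra.
Qed.

Lemma crit_excess_ge : a - 1 <= crit_excess.
Proof. by have [W_ge _] := LambertW_spec lambert_arg_ge; rewrite /crit_excess; lra. Qed.

Lemma slope_num_crit : slope_num crit_excess = 0.
Proof.
have [_ WE] := LambertW_spec lambert_arg_ge.
rewrite slope_numE /crit_excess [a + _]addrC addrK WE mulrCA -expRD.
have -> : c + a + (- a - c) = 0 by ring.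
by rewrite expR0 mulr1 subrr.
Qed.

(* u_c > 0, because s(0) = a (e^c + k) > 0 and s is nonincreasing. *)
Lemma crit_excess_gt0 : 0 < crit_excess.
Proof.
rewrite ltNge; apply/negP => crit_le0.
have slope0_gt0 : 0 < slope_num 0.
  rewrite /slope_num mul0r subr0 addr0; apply: mulr_gt0 => //.
  by have := @denom_gt0 0 (lexx 0); rewrite addr0.
have := @slope_num_noninc _ _ crit_excess_ge crit_le0.
by rewrite slope_num_crit; lra.
Qed.

(* On [u_min, oo) (u_min >= 0), h is maximal at max(u_min, u_c): either u_c
   is feasible and stationary, or u_min > u_c and s(u_min) <= s(u_c) = 0. *)
Lemma excess_ratio_max (umin u : R) : 0 <= umin -> umin <= u ->
  excess_ratio u <= excess_ratio (Num.max umin crit_excess).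
Proof.
move=> umin_ge0 u_ge; have u_ge0 := le_trans umin_ge0 u_ge.
have opt_gt0 : 0 < Num.max umin crit_excess.
  by rewrite lt_max crit_excess_gt0 orbT.
apply: excess_ratio_le => //; rewrite ?denom_gt0 //; first exact: ltW.
have [crit_le | crit_gt] := leP crit_excess umin.
- rewrite mulr_ge0_le0 ?subr_ge0 //.
  by rewrite -slope_num_crit slope_num_noninc // crit_excess_ge.
- by rewrite slope_num_crit mulr0.
Qed.
End ExcessRatio.

Section PowerOfExcess.
Context {R : realType}.
Variables (g sigma2 B : R).
Hypotheses (g_gt0 : 0 < g) (sigma2_gt0 : 0 < sigma2) (B_gt0 : 0 < B).

(* The power at which the normalized rate ln(1 + g p/(sigma^2 B)) is c + u. *)
Definition power_of_excess (c u : R) : R := (expR (c + u) - 1) * sigma2 * B / g.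

Lemma power_of_excessE (c u : R) :
  power_of_excess c u = (expR (c + u) - 1) * (sigma2 * B / g).
Proof. by rewrite /power_of_excess !mulrA. Qed.

Lemma power_of_excess_le (c u v : R) : u <= v ->
  power_of_excess c u <= power_of_excess c v.
Proof.
move=> uv; rewrite !power_of_excessE ler_pM2r ?divr_gt0 ?mulr_gt0 //.
by rewrite lerD2r ler_expR lerD2l.
Qed.

Lemma power_of_excess_max (c u v : R) :
  power_of_excess c (Num.max u v) =
  Num.max (power_of_excess c u) (power_of_excess c v).
Proof.
have [uv | vu] := leP u v.
- by rewrite max_r // power_of_excess_le.
- by rewrite max_l // power_of_excess_le // ltW.
Qed.

Lemma excess_of_power (c umin p : R) : power_of_excess c umin <= p ->
  exists2 u, umin <= u & p = power_of_excess c u.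
Proof.
set x := 1 + p * (g / (sigma2 * B)).
have scaleK : g / (sigma2 * B) * (sigma2 * B / g) = 1.
  by rewrite -invf_div mulVf // gt_eqF // divr_gt0 // mulr_gt0.
have pE : p = (x - 1) * (sigma2 * B / g).
  by rewrite /x addrAC subrr add0r -mulrA scaleK mulr1.
rewrite power_of_excessE {1}pE ler_pM2r ?divr_gt0 ?mulr_gt0 // lerD2r => x_ge.
have x_gt0 : 0 < x by apply: lt_le_trans x_ge; apply: expR_gt0.
exists (ln x - c); last by rewrite power_of_excessE addrCA subrr addr0 lnK ?posrE // -pE.
by rewrite lerBrDl -ler_expR lnK.
Qed.

Lemma pmin_power_of_excess (re rmin : R) :
  pmin g sigma2 rmin B = power_of_excess (re * ln 2 / B) ((rmin - re) * ln 2 / B).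
Proof.
rewrite /pmin /power_of_excess /powR gt_eqF ?ltr0n //.
by congr ((expR _ - 1) * _ * _ / _); field; rewrite gt_eqF.
Qed.

Lemma phi_power_of_excess (kappa a pcir re u : R) : 0 <= u ->
  phi kappa a g sigma2 pcir re (power_of_excess (re * ln 2 / B) u) B =
  kappa * (B / ln 2) `^ a * (g / (sigma2 * B)) *
  excess_ratio a (re * ln 2 / B) (g * pcir / (sigma2 * B) - 1) u.
Proof.
move=> u_ge0; set c := re * ln 2 / B.
have ln2_gt0 : 0 < ln (2 : R) by rewrite ln_gt0 // ltr1n.
rewrite /phi /fpow /rate /log2 /excess_ratio /power_of_excess.
have -> : 1 + g * ((expR (c + u) - 1) * sigma2 * B / g) / (sigma2 * B) =
          expR (c + u) by field; rewrite !gt_eqF ?mulr_gt0.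
have -> : B * (ln (expR (c + u)) / ln 2) - re = B / ln 2 * u.
  by rewrite expRK /c; field; rewrite !gt_eqF.
have -> : (expR (c + u) - 1) * sigma2 * B / g + pcir =
          sigma2 * B / g * (expR (c + u) + (g * pcir / (sigma2 * B) - 1)).
  by field; rewrite !gt_eqF ?mulr_gt0.
rewrite powRM; last by []; last by rewrite divr_ge0 ?ltW.
rewrite invfM invf_div.
ring.
Qed.
End PowerOfExcess.

Theorem lemma13 (R : realType) (g sigma2 pcir re rmin kappa a B : R)
  (hg : 0 < g) (hsigma2 : 0 < sigma2) (hpcir : 0 < pcir) (hre : 0 <= re)
  (hrmin : 0 < rmin) (hrmin_re : re <= rmin)
  (hkappa : 0 < kappa) (ha0 : 0 < a) (ha1 : a < 1) (hB : 0 < B) :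
  let pstar :=
    Num.max (pmin g sigma2 rmin B)
      ((expR (a + re * ln 2 / B
               + LambertW ((a * g * pcir / (sigma2 * B) - a)
                           * expR (- a - re * ln 2 / B))) - 1)
       * sigma2 * B / g) in
  pmin g sigma2 rmin B <= pstar /\
  forall p : R, pmin g sigma2 rmin B <= p ->
    phi kappa a g sigma2 pcir re p B <= phi kappa a g sigma2 pcir re pstar B.
Proof.
move=> pstar; split; first by rewrite le_max lexx.
set c := re * ln 2 / B; set k := g * pcir / (sigma2 * B) - 1.
set umin := (rmin - re) * ln 2 / B.
have ln2_gt0 : 0 < ln (2 : R) by rewrite ln_gt0 // ltr1n.
have c_ge0 : 0 <= c by rewrite divr_ge0 ?mulr_ge0 // ltW.
have umin_ge0 : 0 <= umin by rewrite divr_ge0 ?mulr_ge0 ?subr_ge0 // ltW.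
have k_gtN1 : -1 < k.
  have : 0 < g * pcir / (sigma2 * B) by rewrite divr_gt0 ?mulr_gt0.
  by rewrite /k; lra.
have pminE := pmin_power_of_excess g sigma2 B hB re rmin.
have pstarE : pstar = power_of_excess g sigma2 B c (Num.max umin (crit_excess a c k)).
  rewrite power_of_excess_max // -pminE; congr Num.max.
  have -> : (a * g * pcir / (sigma2 * B) - a) = a * k by rewrite /k; ring.
  rewrite /power_of_excess /crit_excess /c; congr ((expR _ - 1) * _ * _ / _); ring.
move=> p; rewrite pminE => /excess_of_power [] // u u_ge ->.
have opt_ge0 : 0 <= Num.max umin (crit_excess a c k) by rewrite le_max umin_ge0.
rewrite pstarE !phi_power_of_excess //; last exact: le_trans u_ge.
rewrite ler_wpM2l ?excess_ratio_max //.
by rewrite !mulr_ge0 ?powR_ge0 ?ltW ?invr_gt0 ?mulr_gt0.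
Qed.
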